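(* Let $p$ be a design of a random treatment vector $\mathbf Z\in\{0,1\}^n$ and suppose each unit $i$ has potential outcomes of the form $Y_i(z,e)=A_i(z)+B_i(e)+zC_i(e)$, $z\in\{0,1\}$, $e\in\{0,\dots,K_i-1\}$ (with $K_i\ge2$), where $B_i(0)=C_i(0)=0$. Define $$\hat\beta_1=\frac{\sum_i Y_i^{obs}I(Z_i=1,E_i=0)}{\sum_iI(Z_i=1,E_i=0)}-\frac{\sum_i Y_i^{obs}I(Z_i=0,E_i=0)}{\sum_iI(Z_i=0,E_i=0)},\quad \hat\beta_2=\frac{\sum_i Y_i^{obs}I(Z_i=1,E_i=1)}{\sum_iI(Z_i=1,E_i=1)}-\frac{\sum_i Y_i^{obs}I(Z_i=0,E_i=0)}{\sum_iI(Z_i=0,E_i=0)},$$ and assume the design makes the denominators appearing in each estimator positive with probability one. Then $$\mathbb E[\hat\beta_1]=\sum_{i=1}^n\big(A_i(1)\beta_i(1,0)-A_i(0)\beta_i(0,0)\big),$$ $$\mathbb E[\hat\beta_2]=\sum_{i=1}^n\big(A_i(1)\beta_i(1,1)-A_i(0)\beta_i(0,0)\big)+\sum_{i=1}^nB_i(1)\beta_i(1,1)+\sum_{i=1}^nC_i(1)\beta_i(1,1),$$ where $\beta_i(z,e)=\mathbb E\!\left[\frac{I(Z_i=z,E_i=e)}{\sum_jI(Z_j=z,E_j=e)}\right]$.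
   Context: Each unit $i$ has an interference neighborhood $N_i$ and exposure function $f$ mapping $\{0,1\}^{N_i}$ onto $\{0,\dots,K_i-1\}$, with random exposure $E_i=f(\mathbf Z_{N_i})$; level $0$ means not exposed and level $1$ means exposed. Observed outcome $Y_i^{obs}=Y_i(Z_i,E_i)$; expectations are over the design. *)

From mathcomp Require Import all_boot all_order all_algebra.
Set Implicit Arguments. Unset Strict Implicit. Unset Printing Implicit Defensive.
Import Order.TTheory GRing.Theory Num.Theory.
Local Open Scope ring_scope.

Definition assign (n : nat) := {ffun 'I_n -> bool}.

Definition is_design (R : numDomainType) (n : nat) (p : assign n -> R) : Prop :=
  (forall Z, 0 <= p Z) /\ \sum_(Z : assign n) p Z = 1.

Definition expect (R : numDomainType) (n : nat) (p : assign n -> R)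
  (X : assign n -> R) : R := \sum_(Z : assign n) p Z * X Z.

(* indicator I(Z_i = z, E_i = e), where E_i = expo i Z *)
Definition ind (R : numDomainType) (n : nat) (expo : 'I_n -> assign n -> nat)
  (Z : assign n) (i : 'I_n) (z : bool) (e : nat) : R :=
  ((Z i == z) && (expo i Z == e))%:R.

Definition cnt (R : numDomainType) (n : nat) (expo : 'I_n -> assign n -> nat)
  (Z : assign n) (z : bool) (e : nat) : R :=
  \sum_(j < n) ind R expo Z j z e.

Definition Yobs (R : numDomainType) (n : nat) (Y : 'I_n -> bool -> nat -> R)
  (expo : 'I_n -> assign n -> nat) (Z : assign n) (i : 'I_n) : R :=
  Y i (Z i) (expo i Z).

Definition hmean (R : numFieldType) (n : nat) (Y : 'I_n -> bool -> nat -> R)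
  (expo : 'I_n -> assign n -> nat) (Z : assign n) (z : bool) (e : nat) : R :=
  (\sum_(i < n) Yobs Y expo Z i * ind R expo Z i z e) / cnt R expo Z z e.

Definition beta1_hat (R : numFieldType) (n : nat) (Y : 'I_n -> bool -> nat -> R)
  (expo : 'I_n -> assign n -> nat) (Z : assign n) : R :=
  hmean Y expo Z true 0 - hmean Y expo Z false 0.

Definition beta2_hat (R : numFieldType) (n : nat) (Y : 'I_n -> bool -> nat -> R)
  (expo : 'I_n -> assign n -> nat) (Z : assign n) : R :=
  hmean Y expo Z true 1 - hmean Y expo Z false 0.

Definition beta_w (R : numFieldType) (n : nat) (p : assign n -> R)
  (expo : 'I_n -> assign n -> nat) (i : 'I_n) (z : bool) (e : nat) : R :=
  expect p (fun Z => ind R expo Z i z e / cnt R expo Z z e).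

From mathcomp Require Import all_boot all_order all_algebra.
From mathcomp Require Import ring.
Import Order.TTheory GRing.Theory Num.Theory.
Local Open Scope ring_scope.

(* On the event {Z_i = z, E_i = e} the observed outcome is the fixed potential
   outcome Y_i(z,e), so a Hajek mean is a combination of the constants
   Y_i(z,e) with random weights I(Z_i=z,E_i=e) / sum_j I(Z_j=z,E_j=e); by
   linearity its expectation is sum_i Y_i(z,e) beta_i(z,e).  Substituting the
   outcome model, B_i(0) = C_i(0) = 0 leaves only A_i(z) at exposure level 0. *)

Lemma expectB (R : numDomainType) n (p : assign n -> R) (f g : assign n -> R) :
  expect p (fun Z => f Z - g Z) = expect p f - expect p g.
Proof. by rewrite /expect -sumrB; apply: eq_bigr => Z _; rewrite mulrBr. Qed.

Lemma Yobs_ind (R : numDomainType) n (Y : 'I_n -> bool -> nat -> R) expo Z i z e :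
  Yobs Y expo Z i * ind R expo Z i z e = Y i z e * ind R expo Z i z e.
Proof.
rewrite /Yobs /ind; case: eqP => [->|] /=; last by rewrite !mulr0.
by case: eqP => [->|] /=; rewrite ?mulr0.
Qed.

Lemma expect_hmean (R : numFieldType) n (p : assign n -> R) Y expo z e :
  expect p (fun Z => hmean Y expo Z z e) =
  \sum_(i < n) Y i z e * beta_w p expo i z e.
Proof.
rewrite /expect /beta_w /hmean.
under eq_bigr => Z _ do rewrite mulr_suml big_distrr /=.
rewrite exchange_big /=; apply: eq_bigr => i _.
rewrite big_distrr /=; apply: eq_bigr => Z _.
by rewrite Yobs_ind -mulrA mulrCA.
Qed.

Lemma expect_hmean_diff (R : numFieldType) n (p : assign n -> R) Y expo z e z' e' :
  expect p (fun Z => hmean Y expo Z z e - hmean Y expo Z z' e') =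
  \sum_(i < n) (Y i z e * beta_w p expo i z e - Y i z' e' * beta_w p expo i z' e').
Proof. by rewrite expectB !expect_hmean sumrB. Qed.

Theorem proposition11 (R : realFieldType) (n : nat) (p : assign n -> R)
  (N : 'I_n -> {set 'I_n}) (K : 'I_n -> nat)
  (expo : 'I_n -> assign n -> nat)
  (A : 'I_n -> bool -> R) (B C : 'I_n -> nat -> R)
  (Y : 'I_n -> bool -> nat -> R) :
  is_design p ->
  (forall i, (2 <= K i)%N) ->
  (* E_i = f_i(Z_{N_i}) takes values in {0,...,K_i - 1}, onto, and depends
     only on the treatments of the neighborhood N_i *)
  (forall i Z, (expo i Z < K i)%N) ->
  (forall i k, (k < K i)%N -> exists Z, expo i Z = k) ->
  (forall i (Z Z' : assign n), (forall j, j \in N i -> Z j = Z' j) ->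
      expo i Z = expo i Z') ->
  (forall i, B i 0%N = 0) -> (forall i, C i 0%N = 0) ->
  (forall i z e, Y i z e = A i z + B i e + (z%:R) * C i e) ->
  ((forall Z, 0 < p Z -> 0 < cnt R expo Z true 0 /\ 0 < cnt R expo Z false 0) ->
     expect p (beta1_hat Y expo) =
     \sum_(i < n) (A i true * beta_w p expo i true 0
                   - A i false * beta_w p expo i false 0))
  /\
  ((forall Z, 0 < p Z -> 0 < cnt R expo Z true 1 /\ 0 < cnt R expo Z false 0) ->
     expect p (beta2_hat Y expo) =
     \sum_(i < n) (A i true * beta_w p expo i true 1
                   - A i false * beta_w p expo i false 0)
     + \sum_(i < n) B i 1%N * beta_w p expo i true 1
     + \sum_(i < n) C i 1%N * beta_w p expo i true 1).
Proof.
move=> _ _ _ _ _ B0 C0 Ymodel.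
have Y_level0 i z : Y i z 0%N = A i z by rewrite Ymodel B0 C0 mulr0 !addr0.
have Y_treated1 i : Y i true 1%N = A i true + B i 1%N + C i 1%N.
  by rewrite Ymodel mul1r.
split=> _; rewrite /beta1_hat /beta2_hat expect_hmean_diff.
  by apply: eq_bigr => i _; rewrite !Y_level0.
rewrite -!big_split /=; apply: eq_bigr => i _.
by rewrite Y_level0 Y_treated1; ring.
Qed.
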